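(* Let $G$ be a finite, simple, connected graph with at least $2$ vertices. Then $2 \le \mathrm{mob}(G) \le \mathrm{gp}(G)$. Moreover, for any integers $2 \le a \le b$ there exists a (finite, simple, connected) graph $G$ with $\mathrm{mob}(G) = a$ and $\mathrm{gp}(G) = b$.
   Context: All graphs are finite, simple and connected. A set $S$ of vertices of $G$ is a general position set if no three distinct vertices of $S$ lie on a common shortest path of $G$; $\mathrm{gp}(G)$ is the maximum size of a general position set. Mobile general position sets: place one robot on each vertex of a general position set $S$. Robots move one at a time; a move is legal if a robot moves from its vertex to an adjacent unoccupied vertex and the new set of occupied vertices is again a general position set. $S$ is a mobile general position set if there is a finite sequence of legal moves such that every vertex of $G$ is occupied by some robot at some moment (including the initial configuration). $\mathrm{mob}(G)$ is the maximum cardinality of a mobile general position set of $G$. *)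

From mathcomp Require Import all_boot.
From mathcomp Require Import boolp.
Set Implicit Arguments. Unset Strict Implicit. Unset Printing Implicit Defensive.

Definition simple_graph (T : finType) (e : rel T) : Prop :=
  symmetric e /\ irreflexive e.
Definition connected_graph (T : finType) (e : rel T) : Prop :=
  forall x y : T, connect e x y.

Definition shortest_path (T : finType) (e : rel T) (x : T) (p : seq T) : Prop :=
  path e x p /\
  forall q : seq T, path e x q -> last x q = last x p -> size p <= size q.

Definition gen_pos (T : finType) (e : rel T) (S : {set T}) : Prop :=
  forall u v w : T, u \in S -> v \in S -> w \in S ->
    u <> v -> v <> w -> u <> w ->
    ~ (exists (x : T) (p : seq T), shortest_path e x p /\
         u \in x :: p /\ v \in x :: p /\ w \in x :: p).

Definition legal_move (T : finType) (e : rel T) (S S' : {set T}) : Prop :=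
  exists u v : T, u \in S /\ v \notin S /\ e u v /\
    S' = v |: (S :\ u) /\ gen_pos e S'.

Definition mobile_gp (T : finType) (e : rel T) (S : {set T}) : Prop :=
  gen_pos e S /\
  exists s : seq {set T},
    (forall i, i < size s -> legal_move e (nth S (S :: s) i) (nth S s i)) /\
    (forall x : T, exists i, i <= size s /\ x \in nth S (S :: s) i).

Definition gp (T : finType) (e : rel T) : nat :=
  \max_(S : {set T} | `[< gen_pos e S >]) #|S|.

Definition mob (T : finType) (e : rel T) : nat :=
  \max_(S : {set T} | `[< mobile_gp e S >]) #|S|.

(* Any two vertices are in general position, and two robots can visit every
   vertex of a connected graph: one robot walks along a path to the next target,
   and if the next vertex is occupied by the other robot, that robot carries on
   instead.

   For the construction take the clique K_a on {0, ..., a-1} and attach the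
   vertices a, ..., b as leaves of the vertex 0.  Since 0 is universal, every
   geodesic has length at most 2, so a set is in general position iff it
   induces no P3; in particular a general position set containing 0 is a
   clique, hence has at most a vertices.  Some robot must visit 0, so mob <= a,
   and mob = a because the robot of K_a sitting on 0 can shuttle to each leaf
   and back.  The b vertices other than 0 induce no P3, so gp = b. *)

From mathcomp Require Import all_boot boolp.
Set Implicit Arguments. Unset Strict Implicit. Unset Printing Implicit Defensive.

Section Robots.
Variables (T : finType) (e : rel T).

Fixpoint legal_moves (S : {set T}) (s : seq {set T}) : Prop :=
  if s is S' :: s' then legal_move e S S' /\ legal_moves S' s' else True.

Lemma legal_moves_nth S s : legal_moves S s ->
  forall i, i < size s -> legal_move e (nth S (S :: s) i) (nth S s i).
Proof.
elim: s S => [|S' s IH] S //= [SS' S's] [|i] //= lt_is.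
have := IH _ S's i lt_is.
by rewrite (set_nth_default S S' lt_is) (set_nth_default S S') // ltnW.
Qed.

Lemma legal_moves_cat S s1 s2 :
  legal_moves S s1 -> legal_moves (last S s1) s2 -> legal_moves S (s1 ++ s2).
Proof. by elim: s1 S => [|S' s IH] S //= [SS' S's] ?; split => //; apply: IH. Qed.

Lemma mobile_gp_of_legal_moves S s : gen_pos e S -> legal_moves S s ->
  (forall x, has (fun X : {set T} => x \in X) (S :: s)) -> mobile_gp e S.
Proof.
move=> gpS Ss cover; split=> //; exists s; split; first exact: legal_moves_nth.
move=> x; have /hasP [X sX xX] := cover x.
by exists (index X (S :: s)); rewrite nth_index // -ltnS index_mem.
Qed.

Lemma gen_pos_pair x y : gen_pos e [set x; y].
Proof. by move=> u v w; rewrite !inE => /orP[]/eqP-> /orP[]/eqP-> /orP[]/eqP->. Qed.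

Lemma legal_move_card S S' : legal_move e S S' -> #|S'| = #|S|.
Proof.
move=> [u [v [uS [vS [_ [-> _]]]]]].
by rewrite cardsU1 (cardsD1 u S) uS !inE negb_and vS orbT.
Qed.

Lemma mobile_gp_visit S x : mobile_gp e S ->
  exists S', [/\ gen_pos e S', #|S'| = #|S| & x \in S'].
Proof.
move=> [gpS [s [moves cover]]]; have [i [le_is xSi]] := cover x.
exists (nth S (S :: s) i); split=> //; elim: i le_is {xSi} => [|i IH] lt_is //=.
- by have [u [v [_ [_ [_ [_ ?]]]]]] := moves i lt_is.
- by rewrite (legal_move_card (moves i lt_is)) IH // ltnW.
Qed.

Lemma gen_pos_le_gp S : gen_pos e S -> #|S| <= gp e.
Proof.
by move=> gpS; apply: (leq_bigmax_cond (P := fun S => `[< gen_pos e S >])); apply/asboolP.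
Qed.

Lemma gp_le n : (forall S, gen_pos e S -> #|S| <= n) -> gp e <= n.
Proof. by move=> le_n; apply/bigmax_leqP => S /asboolP; apply: le_n. Qed.

Lemma mobile_gp_le_mob S : mobile_gp e S -> #|S| <= mob e.
Proof.
by move=> mS; apply: (leq_bigmax_cond (P := fun S => `[< mobile_gp e S >])); apply/asboolP.
Qed.

Lemma mob_le n : (forall S, mobile_gp e S -> #|S| <= n) -> mob e <= n.
Proof. by move=> le_n; apply/bigmax_leqP => S /asboolP; apply: le_n. Qed.

Lemma mob_le_gp : mob e <= gp e.
Proof. by apply: mob_le => S [gpS _]; apply: gen_pos_le_gp. Qed.

Hypothesis e_sym : symmetric e.

Lemma legal_move_sym S S' : gen_pos e S -> legal_move e S S' -> legal_move e S' S.
Proof.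
move=> gpS [u [v [uS [vS [uv [-> gpS']]]]]].
have neq_uv : u != v by apply: contraNneq vS => <-.
exists v, u; rewrite !inE !eqxx (negbTE neq_uv) e_sym; do 4!split => //.
apply/setP => x; rewrite !inE.
case: (eqVneq x u) => [->|_] /=; first by rewrite uS.
by case: (eqVneq x v) => [->|]; rewrite ?(negbTE vS).
Qed.

Lemma mobile_gp_of_round_trips S : gen_pos e S ->
  (forall x, x \notin S -> exists2 X, legal_move e S X & x \in X) -> mobile_gp e S.
Proof.
move=> gpS trip.
suff [s [Ss cover]] : exists s, legal_moves S s /\
    {in enum T, forall x, has (fun X : {set T} => x \in X) (S :: s)}.
  by apply: (mobile_gp_of_legal_moves gpS Ss) => x; rewrite cover ?mem_enum.
elim: (enum T) => [|x xs [s [Ss cover]]]; first by exists [::].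
have [xS | /trip [X SX xX]] := boolP (x \in S).
  by exists s; split=> // y; rewrite inE => /predU1P [->|/cover]; rewrite /= ?xS.
exists [:: X, S & s]; split; first by do !split=> //; apply: legal_move_sym.
move=> y; rewrite inE => /predU1P [->|/cover /= /orP [->|->]]; rewrite /= ?xX ?orbT //.
Qed.

Hypothesis e_irr : irreflexive e.

Lemma legal_move_pair a b c : a != b -> c != b -> e a c ->
  legal_move e [set a; b] [set c; b].
Proof.
move=> ab cb ac; have ca : c != a by apply: contraTneq ac => ->; rewrite e_irr.
exists a, c; rewrite !inE eqxx negb_or ca cb; do 4!split=> //; last exact: gen_pos_pair.
apply/setP => x; rewrite !inE.
by case: (eqVneq x a) => [->|]; rewrite ?orbF // eq_sym (negbTE ab) (negbTE ca).
Qed.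

Lemma legal_moves_along_path p a b : path e a p -> a != b ->
  exists s, legal_moves [set a; b] s /\
    exists2 y, last [set a; b] s = [set last a p; y] & last a p != y.
Proof.
elim: p a b => [|c p IH] a b /=; first by move=> _ ab; exists [::]; split=> //; exists b.
move=> /andP [ac cp] ab; have [cb | cb] := eqVneq c b.
  by rewrite setUC; subst c; apply: IH; rewrite // eq_sym.
have [s [cs last_s]] := IH c b cp cb.
by exists ([set c; b] :: s); split=> //; split=> //; apply: legal_move_pair.
Qed.

Hypothesis e_conn : connected_graph e.

Lemma legal_moves_cover (xs : seq T) a b : a != b ->
  exists s, legal_moves [set a; b] s /\
    {in xs, forall x, has (fun X : {set T} => x \in X) ([set a; b] :: s)}.
Proof.
elim: xs a b => [|x xs IH] a b ab; first by exists [::].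
have /connectP [p ap ->] := e_conn a x.
have [s1 [ab_s1 [y last_s1 xy]]] := legal_moves_along_path ap ab.
have [s2 [xy_s2 cover]] := IH _ _ xy.
have visited_last z : z \in last [set a; b] s1 ->
    has (fun X : {set T} => z \in X) ([set a; b] :: s1).
  by move=> zl; apply/hasP; exists (last [set a; b] s1); first exact: mem_last.
exists (s1 ++ s2); split; first by apply: legal_moves_cat; rewrite ?last_s1.
move=> z; rewrite -cat_cons has_cat inE => /predU1P [->|/cover /hasP [X]].
  by rewrite visited_last // last_s1 !inE eqxx.
rewrite inE => /predU1P [-> zX|s2X zX]; first by rewrite visited_last ?last_s1.
by apply/orP; right; apply/hasP; exists X.
Qed.

Lemma two_le_mob : 1 < #|T| -> 2 <= mob e.
Proof.
move=> /card_gt1P [a [b [_ _ ab]]].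
have [s [ab_s cover]] := legal_moves_cover (enum T) ab.
have <- : #|[set a; b]| = 2 by rewrite cards2 ab.
apply/mobile_gp_le_mob/(mobile_gp_of_legal_moves _ ab_s) => [|x]; first exact: gen_pos_pair.
by apply: cover; rewrite mem_enum.
Qed.

End Robots.

Section InducedP3.
Variables (T : finType) (e : rel T).

Definition P3_free (S : {set T}) := forall u v w, u \in S -> v \in S -> w \in S ->
  e u v -> e v w -> u != w -> e u w.

Definition clique (S : {set T}) := {in S &, forall x y, x != y -> e x y}.

Lemma clique_P3_free S : clique S -> P3_free S.
Proof. by move=> cS u v w uS _ wS _ _; apply: cS. Qed.

Hypothesis e_irr : irreflexive e.

Lemma gen_pos_P3_free S : gen_pos e S -> P3_free S.
Proof.
move=> gpS u v w uS vS wS uv vw uw; apply: contraT => not_uw.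
have neq_uv : u <> v by move=> eq_uv; rewrite eq_uv e_irr in uv.
have neq_vw : v <> w by move=> eq_vw; rewrite eq_vw e_irr in vw.
case: (gpS u v w uS vS wS neq_uv neq_vw (elimN eqP uw)).
exists u, [:: v; w]; rewrite !inE !eqxx !orbT; split=> //; split=> /=; first by rewrite uv vw.
case=> [|z [|? ?]] //= => [_ eq_uw | /andP [uz _] eq_zw].
- by rewrite eq_uw eqxx in uw.
- by rewrite -eq_zw uz in not_uw.
Qed.

Hypothesis e_sym : symmetric e.
Variable c : T.
Hypothesis c_universal : forall x, x != c -> e c x.

Lemma universal_connected : connected_graph e.
Proof.
have from_c y : connect e c y.
  by have [-> | yc] := eqVneq y c; [exact: connect0 | exact/connect1/c_universal].
by move=> x y; apply: connect_trans (from_c y); rewrite sym_connect_sym.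
Qed.

Lemma shortest_path_size_le2 x p : shortest_path e x p -> size p <= 2.
Proof.
move=> [_ p_min]; set y := last x p.
have [xy | xy] := eqVneq x y; first exact: leq_trans (p_min [::] isT xy) _.
have [exy | nexy] := boolP (e x y).
  by apply: leq_trans (p_min [:: y] _ _) _; rewrite //= exy.
have xc : x != c by apply: contraNneq nexy => xc; rewrite xc c_universal // -xc eq_sym.
have yc : y != c by apply: contraNneq nexy => ->; rewrite e_sym c_universal.
by apply: (p_min [:: c; y]) => //=; rewrite e_sym !c_universal.
Qed.

Lemma P3_free_gen_pos S : P3_free S -> gen_pos e S.
Proof.
move=> P3S u v w uS vS wS uv vw uw [x [p [[xp p_min] uvw_p]]].
have size_p := shortest_path_size_le2 (conj xp p_min).
have uniq_uvw : uniq [:: u; v; w].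
  by rewrite /= !inE !negb_or andbT -andbA; apply/and3P; split; apply/eqP.
have sub_uvw : {subset [:: u; v; w] <= x :: p}.
  by case: uvw_p => ? [? ?] z; rewrite !inE => /or3P [] /eqP ->.
clear uvw_p.
have := uniq_leq_size uniq_uvw sub_uvw.
case: p xp p_min size_p sub_uvw => [|y [|z [|? ?]]] //= /and3P [xy yz _] p_min _ sub_uvw _.
have [_ /(_ _)/esym xyz_uvw] := uniq_min_size uniq_uvw sub_uvw (leqnn 3).
have inS t : t \in [:: x; y; z] -> t \in S by rewrite xyz_uvw !inE => /or3P [] /eqP ->.
have xz : x != z by apply/eqP => eq_xz; have := p_min [::] isT eq_xz.
have nexz : ~~ e x z.
  by apply/negP => exz; have := p_min [:: z]; rewrite /= exz => /(_ isT erefl).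
by rewrite (P3S x y z) ?inS ?inE ?eqxx ?orbT in nexz.
Qed.

Lemma gen_pos_universal_clique S : gen_pos e S -> c \in S -> clique S.
Proof.
move=> gpS cS x y xS yS.
have [-> cy | xc] := eqVneq x c; first by rewrite c_universal // eq_sym.
have [-> _ | yc xy] := eqVneq y c; first by rewrite e_sym c_universal.
by apply: (gen_pos_P3_free gpS xS cS yS _ (c_universal yc) xy); rewrite e_sym c_universal.
Qed.

Lemma clique_gen_pos S : clique S -> gen_pos e S.
Proof. by move=> cS; apply/P3_free_gen_pos/clique_P3_free. Qed.

End InducedP3.

Section CliqueWithPendants.
Variables a b : nat.
Hypotheses (a_ge2 : 2 <= a) (a_le_b : a <= b).

Definition hub : 'I_b.+1 := ord0.

Definition clique_pendants : rel 'I_b.+1 :=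
  fun i j => (i != j) && [|| i == hub, j == hub | (i < a) && (j < a)].

Definition core : {set 'I_b.+1} := [set i : 'I_b.+1 | i < a].

Lemma clique_pendants_simple : simple_graph clique_pendants.
Proof.
split=> [i j | i]; last by rewrite /clique_pendants eqxx.
by rewrite /clique_pendants eq_sym orbCA [(i < a) && _]andbC.
Qed.

Lemma hub_universal x : x != hub -> clique_pendants hub x.
Proof. by rewrite /clique_pendants eq_sym eqxx => ->. Qed.

Lemma hub_in_core : hub \in core.
Proof. by rewrite inE; apply: leq_trans a_ge2. Qed.

Lemma card_core : #|core| = a.
Proof.
rewrite cardsE cardE /enum_mem size_filter -enumT /=.
rewrite -(count_map val (fun i : nat => i < a)) val_enum_ord -size_filter.
by rewrite (filter_iota_ltn 0 (leqW a_le_b)) size_iota.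
Qed.

Lemma core_clique : clique clique_pendants core.
Proof. by move=> i j; rewrite !inE /clique_pendants => -> -> ->; rewrite !orbT. Qed.

Lemma P3_free_hub_notin (S : {set 'I_b.+1}) : hub \notin S -> P3_free clique_pendants S.
Proof.
move=> hubS u v w uS vS wS; rewrite /clique_pendants.
have notin_hub t : t \in S -> (t == hub) = false.
  by move=> tS; apply: contraNF hubS => /eqP <-.
by rewrite !notin_hub //= => /andP [_ /andP [-> _]] /andP [_ /andP [_ ->]] ->.
Qed.

Lemma clique_card_le (S : {set 'I_b.+1}) : clique clique_pendants S -> #|S| <= a.
Proof.
move=> cS; have [x /andP [xS ax] | no_leaf] := pickP [pred x in S | a <= x].
  have xhub : x != hub.
    by apply: contraTneq ax => ->; rewrite -ltnNge; apply: leq_trans a_ge2.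
  apply: leq_trans a_ge2; have <- : #|[set x; hub]| = 2 by rewrite cards2 xhub.
  apply/subset_leq_card/subsetP => y yS; rewrite !inE; case: eqVneq => //= yx.
  have := cS _ _ xS yS; rewrite eq_sym yx /clique_pendants (negbTE xhub) ltnNge ax.
  by move=> /(_ isT) /andP [_]; rewrite orbF.
rewrite -card_core; apply/subset_leq_card/subsetP => y yS.
by move: (no_leaf y); rewrite /= yS inE ltnNge /= => ->.
Qed.

Lemma gen_pos_hub_card_le (S : {set 'I_b.+1}) :
  gen_pos clique_pendants S -> hub \in S -> #|S| <= a.
Proof.
have [e_sym e_irr] := clique_pendants_simple.
move=> gpS hubS; apply: clique_card_le.
exact: (gen_pos_universal_clique e_irr e_sym hub_universal).
Qed.

Lemma gp_clique_pendants : gp clique_pendants = b.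
Proof.
have [e_sym e_irr] := clique_pendants_simple.
have card_nonhub : #|[set~ hub]| = b by rewrite cardsC1 card_ord.
apply/eqP; rewrite eqn_leq; apply/andP; split.
  apply: gp_le => S gpS; have [hubS | hubS] := boolP (hub \in S).
    exact: leq_trans (gen_pos_hub_card_le gpS hubS) a_le_b.
  rewrite -[X in _ <= X]card_nonhub.
  by apply/subset_leq_card/subsetP => x xS; rewrite !inE; apply: contraNneq hubS => <-.
rewrite -[X in X <= _]card_nonhub.
apply: gen_pos_le_gp; apply: (P3_free_gen_pos e_sym hub_universal).
by apply: P3_free_hub_notin; rewrite !inE eqxx.
Qed.

Lemma mob_clique_pendants : mob clique_pendants = a.
Proof.
have [e_sym e_irr] := clique_pendants_simple.
apply/eqP; rewrite eqn_leq; apply/andP; split.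
  apply: mob_le => S /(mobile_gp_visit hub) [S' [gpS' <- hubS']].
  exact: gen_pos_hub_card_le.
rewrite -[X in X <= _]card_core; apply/mobile_gp_le_mob/mobile_gp_of_round_trips => //.
  exact: (clique_gen_pos e_sym hub_universal core_clique).
move=> x x_leaf; have xhub : x != hub by apply: contraNneq x_leaf => ->; apply: hub_in_core.
exists (x |: (core :\ hub)); last by rewrite !inE eqxx.
exists hub, x; rewrite hub_in_core hub_universal //; do 4!split => //.
apply: (P3_free_gen_pos e_sym hub_universal); apply: P3_free_hub_notin.
by rewrite !inE eqxx eq_sym (negbTE xhub).
Qed.

End CliqueWithPendants.

Theorem lemma1p1 :
  (forall (T : finType) (e : rel T),
      simple_graph e -> connected_graph e -> 1 < #|T| ->
      2 <= mob e <= gp e) /\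
  (forall a b : nat, 2 <= a -> a <= b ->
      exists (T : finType) (e : rel T),
        simple_graph e /\ connected_graph e /\ mob e = a /\ gp e = b).
Proof.
split=> [T e [e_sym e_irr] e_conn T_gt1 | a b a_ge2 a_le_b].
  by rewrite mob_le_gp (two_le_mob e_irr e_conn T_gt1).
have [e_sym _] := @clique_pendants_simple a b.
exists 'I_b.+1, (@clique_pendants a b); split; first exact: clique_pendants_simple.
split; first exact (universal_connected e_sym (@hub_universal a b)).
by split; [exact: mob_clique_pendants | exact: gp_clique_pendants].
Qed.
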